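(* Let $k\geqslant 1$, let $n_1,\ldots,n_k$ be positive integers and $a_1,\ldots,a_k$ integers with $0\leqslant a_s<n_s$ for each $s$. Suppose that $p$ is a prime such that $$\sum_{s=1}^k\frac{e^{2\pi i a_s/p}}{1-e^{2\pi i n_s/p}}=0.$$ Then $$n_1+\cdots+n_k-k+1\geqslant |S(n_1,\ldots,n_k)|\geqslant p.$$
   Context: For positive integers $n_1,\ldots,n_k$, $S(n_1,\ldots,n_k)=\{r/n_s: r=0,\ldots,n_s-1;\ s=1,\ldots,k\}$, a set of rational numbers, and $|S(\cdot)|$ denotes its cardinality. (The hypothesis implicitly requires $p\nmid n_s$ for all $s$, so that the denominators are nonzero.) *)

From Stdlib Require Import Reals.
From Coquelicot Require Import Coquelicot.
From mathcomp Require Import all_boot all_order all_algebra.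

Set Implicit Arguments.
Unset Strict Implicit.
Unset Printing Implicit Defensive.

Definition cis (t : R) : C := (cos t, sin t).

Definition ep (p m : nat) : C := cis (Rdiv (Rmult (Rmult (IZR 2) PI) (INR m)) (INR p)).

(* S(n_1,...,n_k) = { r / n_s : 0 <= r < n_s, 1 <= s <= k } as a duplicate-free
   list of rationals; its cardinality is the size of this list. *)
Definition Sset (k : nat) (n : 'I_k -> nat) : seq rat :=
  undup [seq GRing.mul ((Posz r)%:Q) (GRing.inv ((Posz (n s))%:Q)) | s <- enum 'I_k, r <- iota 0 (n s)].

Definition Scard (k : nat) (n : 'I_k -> nat) : nat := size (Sset n).

(* Let z be a primitive p-th root of unity and G_m = 1 + X + ... + X^(m-1), so that
   1 - z^m = (1 - z) G_m(z) and G_m is the product of the Phi_d with 1 < d | m.  Multiplying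
   the vanishing sum by (1 - z) L(z), where L is the lcm of the G_(n_s), i.e. the product of the
   Phi_d over the divisors d > 1 of the n_s, shows that z is a root of the integer polynomial
   N = sum_s X^(a_s) L / G_(n_s).  N is nonzero (all its terms have the same sign at 1) and
   deg N <= deg L because a_s < n_s, while a nonzero integer polynomial vanishing at z has
   degree at least p - 1.  Hence p <= 1 + deg L = sum_d totient d, which counts the fractions
   r/d in lowest terms with d a divisor of some n_s; these are distinct elements of S.  The
   upper bound holds because 0 = 0/n_s is listed k times in S. *)

From Stdlib Require Import Reals Lra.
From Coquelicot Require Import Coquelicot.
From mathcomp Require Import all_boot all_order all_algebra all_field.
From mathcomp Require Import Rstruct complex ring.
Import Order.TTheory GRing.Theory Num.Theory.

Set Implicit Arguments.
Unset Strict Implicit.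
Unset Printing Implicit Defensive.

Section CyclotomicPolynomials.
Local Open Scope ring_scope.

Lemma Cyclotomic1 : 'Phi_1 = 'X - 1.
Proof. by have := prod_Cyclotomic (ltn0Sn 0); rewrite big_seq1 expr1. Qed.

Lemma root_Cyclotomic_expr (L : fieldType) (z : L) d :
  (0 < d)%N -> root (map_poly intr 'Phi_d) z -> z ^+ d = 1.
Proof.
move=> d_gt0 rz; apply/eqP; rewrite -subr_eq0.
have := congr1 (map_poly (intr : int -> L)) (prod_Cyclotomic d_gt0).
rewrite rmorph_prod rmorphB rmorph1 /= rmorphXn /= map_polyX => /(congr1 (horner^~ z)).
rewrite !hornerE horner_prod => <-.
by rewrite (bigD1_seq d) ?divisors_id ?divisors_uniq //= (eqP rz) mul0r.
Qed.

Lemma root_Cyclotomic (L : fieldType) (z : L) n :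
  n.-primitive_root z -> root (map_poly intr 'Phi_n) z.
Proof.
move=> prim_z; have n_gt0 := prim_order_gt0 prim_z.
have := congr1 (map_poly (intr : int -> L)) (prod_Cyclotomic n_gt0).
rewrite rmorph_prod rmorphB rmorph1 /= rmorphXn /= map_polyX => E.
have : root ('X^n - 1) z by rewrite /root !hornerE (prim_expr_order prim_z) subrr.
rewrite -E /root horner_prod prodf_seq_eq0 => /hasP[d d_div /= rd].
have d_dvd_n : (d %| n)%N by rewrite dvdn_divisors.
have d_gt0 := dvdn_gt0 n_gt0 d_dvd_n.
have n_dvd_d : (n %| d)%N.
  by rewrite (prim_order_dvd prim_z) (root_Cyclotomic_expr d_gt0 rd).
have -> : n = d by apply/anti_leq; rewrite (dvdn_leq n_gt0) ?(dvdn_leq d_gt0).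
exact: rd.
Qed.

Lemma Cyclotomic_horner1_neq0 d : (1 < d)%N -> ('Phi_d).[1] != 0.
Proof.
move=> d_gt1; have d_gt0 := ltnW d_gt1; have [z prim_z] := C_prim_root_exists d_gt0.
apply/negP => /eqP Phi1_0.
have : root (cyclotomic z d) 1.
  rewrite -(Cintr_Cyclotomic prim_z) /root -[1 : algC](rmorph1 (intr : int -> algC)).
  by rewrite horner_map Phi1_0 rmorph0.
rewrite root_cyclotomic // => /prim_order_dvd/(_ 1%N).
by rewrite expr1 eqxx dvdn1 gtn_eqF.
Qed.

Lemma totient_lt_size_root (L : numFieldType) (z : L) n (q : {poly int}) :
  n.-primitive_root z -> q != 0 -> root (map_poly intr q) z -> (totient n < size q)%N.
Proof.
move=> prim_z q_neq0 rq.
have n_gt0 := prim_order_gt0 prim_z.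
pose qQ : {poly rat} := map_poly intr q.
pose PhiQ : {poly rat} := map_poly intr 'Phi_n.
have ratr_intr (F : numFieldType) (r : {poly int}) :
    map_poly (ratr : rat -> F) (map_poly intr r) = map_poly intr r.
  by rewrite -map_poly_comp; apply: eq_map_poly => x /=; rewrite rmorph_int.
have size_qQ : size qQ = size q by rewrite size_map_inj_poly //; apply: intr_inj.
have qQ_neq0 : qQ != 0 by rewrite -size_poly_eq0 size_qQ size_poly_eq0.
(* [z] is a common root of [q] and [Phi_n], so their gcd over [rat] has a complex
   root, which is then a primitive [n]-th root of unity in [algC]. *)
pose g := gcdp qQ PhiQ.
have root_g : root (map_poly (ratr : rat -> L) g) z.
  by rewrite gcdp_map root_gcd !ratr_intr rq root_Cyclotomic.
have size_g : size (map_poly (ratr : rat -> algC) g) != 1%N.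
  rewrite size_map_poly -(size_map_poly (ratr : {rmorphism rat -> L})).
  rewrite gtn_eqF // (root_size_gt1 _ root_g) // map_poly_eq0.
  by rewrite gcdp_eq0 negb_and qQ_neq0.
have [x] := closed_rootP _ size_g.
rewrite gcdp_map root_gcd !ratr_intr => /andP[rqx rPhix].
have [w prim_w] := C_prim_root_exists n_gt0.
have prim_x : n.-primitive_root x.
  by rewrite -(root_cyclotomic prim_w) -(Cintr_Cyclotomic prim_w).
have [mx [mxE _] mx_dvd] := minCpolyP x.
have : mx %| qQ by rewrite -mx_dvd ratr_intr.
move/(dvdp_leq qQ_neq0); rewrite size_qQ; apply: leq_trans.
rewrite -(size_map_poly (ratr : {rmorphism rat -> algC})) -mxE.
by rewrite (minCpoly_cyclotomic prim_x) size_cyclotomic.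
Qed.

Definition geom_poly m : {poly int} := \sum_(i < m) 'X^i.

Lemma geom_polyE m : ('X - 1) * geom_poly m = 'X^m - 1.
Proof. by rewrite subrX1. Qed.

Lemma geom_poly_Cyclotomic m :
  (0 < m)%N -> geom_poly m = \prod_(d <- divisors m | d != 1%N) 'Phi_d.
Proof.
move=> m_gt0; apply: (@mulfI _ ('X - 1)); first by rewrite polyXsubC_eq0.
rewrite geom_polyE -Cyclotomic1 -(prod_Cyclotomic m_gt0).
by rewrite (bigD1_seq 1%N) ?divisor1 ?divisors_uniq.
Qed.

Lemma size_geom_poly m : size (geom_poly m) = m.
Proof.
case: m => [|m]; first by rewrite /geom_poly big_ord0 size_poly0.
have := congr1 (fun q : {poly int} => size q) (geom_polyE m.+1).
rewrite size_mul ?polyXsubC_eq0 //; last first.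
  apply: contra_eq_neq (geom_polyE m.+1) => ->.
  by rewrite mulr0 eq_sym -size_poly_eq0 size_XnsubC.
by rewrite size_XsubC size_XnsubC //= => -[].
Qed.

Lemma geom_poly_horner1 m : (geom_poly m).[1] = m%:R.
Proof.
rewrite /geom_poly horner_sum (eq_bigr (fun=> 1)) ?sumr_const ?card_ord // => i _.
by rewrite hornerXn expr1n.
Qed.

Lemma geom_poly_horner (L : comNzRingType) m (x : L) :
  (x - 1) * (map_poly intr (geom_poly m)).[x] = x ^+ m - 1.
Proof.
have := congr1 (fun q => (map_poly (intr : int -> L) q).[x]) (geom_polyE m).
by rewrite /= !rmorphM !rmorphB /= !map_polyXn map_polyX rmorph1 !hornerE.
Qed.

End CyclotomicPolynomials.

Section DenominatorPolynomials.
Local Open Scope ring_scope.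

Variables (k : nat) (n : 'I_k -> nat).
Hypotheses (k_gt0 : (0 < k)%N) (n_gt0 : forall s, (0 < n s)%N).

Definition denominators : seq nat := undup (flatten [seq divisors (n s) | s <- enum 'I_k]).

Definition lcm_geom_poly : {poly int} := \prod_(d <- denominators | d != 1%N) 'Phi_d.

Definition geom_cofactor s : {poly int} := \prod_(d <- denominators | ~~ (d %| n s)%N) 'Phi_d.

Definition numer_poly (a : 'I_k -> nat) : {poly int} := \sum_(s < k) 'X^(a s) * geom_cofactor s.

Lemma mem_denominators d : (d \in denominators) = [exists s, d %| n s]%N.
Proof.
rewrite mem_undup; apply/flattenP/existsP => [[_ /mapP[s _ ->]]|[s d_dvd]].
  by rewrite -dvdn_divisors //; exists s.
by exists (divisors (n s)); [apply: map_f; rewrite mem_enum | rewrite -dvdn_divisors].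
Qed.

Lemma denominators_gt0 d : d \in denominators -> (0 < d)%N.
Proof. by rewrite mem_denominators => /existsP[s /dvdn_gt0]; apply. Qed.

Lemma lcm_geom_polyE s : lcm_geom_poly = geom_poly (n s) * geom_cofactor s.
Proof.
rewrite geom_poly_Cyclotomic // /lcm_geom_poly /geom_cofactor.
rewrite (bigID (fun d => d %| n s)%N) /=.
congr (_ * _); last first.
  apply: eq_bigl => d; case: (boolP (d %| n s)%N) => [|nd]; rewrite ?andbF ?andbT //.
  by apply: contraNneq nd => ->; apply: dvd1n.
rewrite -big_filter -[RHS]big_filter; apply: perm_big.
apply: uniq_perm; rewrite ?filter_uniq ?undup_uniq ?divisors_uniq // => d.
rewrite !mem_filter -dvdn_divisors // mem_denominators.
case: (boolP (d %| n s)%N) => d_dvd; rewrite ?andbF //= andbT.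
suff -> : [exists s, d %| n s]%N by rewrite andbT.
by apply/existsP; exists s.
Qed.

Lemma geom_cofactor_neq0 s : geom_cofactor s != 0.
Proof.
rewrite prodf_seq_neq0; apply/allP => d _; apply/implyP => _.
by apply: monic_neq0; apply: Cyclotomic_monic.
Qed.

Lemma size_numer_poly a :
  (forall s, a s < n s)%N -> (size (numer_poly a) <= size lcm_geom_poly)%N.
Proof.
move=> a_lt_n; apply: leq_trans (size_sum _ _ _) _; apply/bigmax_leqP => s _.
rewrite mulrC size_mulXn ?geom_cofactor_neq0 // (lcm_geom_polyE s).
rewrite size_mul ?geom_cofactor_neq0 -?size_poly_eq0 ?size_geom_poly -?lt0n //.
by rewrite -(prednK (n_gt0 s)) addSn leq_add2r -ltnS prednK.
Qed.

Lemma one_in_denominators : 1%N \in denominators.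
Proof. by rewrite mem_denominators; apply/existsP; exists (Ordinal k_gt0). Qed.

Lemma size_lcm_geom_poly : size lcm_geom_poly = (\sum_(d <- denominators) totient d)%N.
Proof.
rewrite /lcm_geom_poly -big_filter size_prod_seq => [|d _]; last first.
  by apply: monic_neq0; apply: Cyclotomic_monic.
rewrite (bigD1_seq 1%N one_in_denominators) ?undup_uniq //= -big_filter.
under eq_bigr do rewrite size_Cyclotomic -addn1.
by rewrite big_split /= sum1_size filter_predT big_filter -addSn addnK add1n.
Qed.

(* Evaluating at [1]: [c * numer.[1]] is a sum of the positive terms
   [c * cofactor_s.[1] = n s * cofactor_s.[1] ^ 2], where [c = lcm_geom.[1] != 0]. *)
Lemma numer_poly_neq0 a : numer_poly a != 0.
Proof.
set c := lcm_geom_poly.[1].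
have c_neq0 : c != 0.
  rewrite /c horner_prod prodf_seq_neq0; apply/allP => d d_den; apply/implyP => d_neq1.
  by apply: Cyclotomic_horner1_neq0; rewrite ltn_neqAle eq_sym d_neq1 denominators_gt0.
have term_gt0 s : 0 < c * ('X^(a s) * geom_cofactor s).[1].
  have cE : c = (n s)%:R * (geom_cofactor s).[1].
    by rewrite /c (lcm_geom_polyE s) hornerM geom_poly_horner1.
  have cof_neq0 : (geom_cofactor s).[1] != 0.
    by apply: contraNneq c_neq0; rewrite cE => ->; rewrite mulr0.
  rewrite hornerM hornerXn expr1n mul1r {1}cE -mulrA pmulr_rgt0 ?ltr0n //.
  by rewrite lt_def mulf_neq0 //= -expr2 sqr_ge0.
apply: contraTneq (term_gt0 (Ordinal k_gt0)) => numer0.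
have : c * (numer_poly a).[1] == 0 by rewrite numer0 horner0 mulr0.
rewrite /numer_poly horner_sum mulr_sumr psumr_eq0 => [|s _]; last exact: ltW.
by move/allP/(_ (Ordinal k_gt0) (mem_index_enum _)) => /= /eqP ->; rewrite ltxx.
Qed.

Lemma root_numer_poly (L : fieldType) a (z : L) : (forall s, z ^+ n s != 1) ->
  \sum_(s < k) z ^+ a s / (1 - z ^+ n s) = 0 -> root (map_poly intr (numer_poly a)) z.
Proof.
move=> zn_neq1 sum0; set c := (map_poly (intr : int -> L) lcm_geom_poly).[z].
have cofactorE s : (map_poly intr (geom_cofactor s)).[z] = (z - 1) * c / (z ^+ n s - 1).
  have zn1 : z ^+ n s - 1 != 0 by rewrite subr_eq0.
  apply: (mulfI zn1); rewrite [RHS]mulrC divfK // /c (lcm_geom_polyE s) rmorphM hornerM.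
  by rewrite mulrA geom_poly_horner.
rewrite /root /numer_poly rmorph_sum horner_sum.
rewrite (eq_bigr (fun s => - ((z - 1) * c) * (z ^+ a s / (1 - z ^+ n s)))) => [|s _].
  by rewrite -mulr_sumr sum0 mulr0.
rewrite rmorphM /= map_polyXn hornerM hornerXn cofactorE.
have zn1 : z ^+ n s - 1 != 0 by rewrite subr_eq0.
have zn2 : 1 - z ^+ n s != 0 by rewrite subr_eq0 eq_sym.
by field; apply/andP.
Qed.

End DenominatorPolynomials.

Section Counting.
Local Open Scope ring_scope.

Lemma size_undup_le_count (T : eqType) (x : T) (s : seq T) :
  (size (undup s) <= size s - count_mem x s + 1)%N.
Proof.
rewrite -(count_predC (pred1 x) s) addKn addn1 -size_filter -/(size (x :: _)).
apply: (uniq_leq_size (undup_uniq s)) => y; rewrite mem_undup inE mem_filter /=.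
by case: (y == x).
Qed.

Lemma coprime_fraction_inj (r1 d1 r2 d2 : nat) :
  (0 < d1)%N -> (0 < d2)%N -> coprime r1 d1 -> coprime r2 d2 ->
  (Posz r1)%:Q / (Posz d1)%:Q = (Posz r2)%:Q / (Posz d2)%:Q -> d1 = d2 /\ r1 = r2.
Proof.
move=> d1_gt0 d2_gt0 cop1 cop2 E.
have := congr1 denq E; have := congr1 numq E.
rewrite !coprimeq_den ?coprimeq_num //= !gtr0_sg ?ltr0n // !mul1r.
rewrite !gtr0_norm ?ltr0n //.
case: d1 d1_gt0 {cop1 E} => // d1 _; case: d2 d2_gt0 {cop2} => // d2 _.
by move=> -[->] -[->].
Qed.

Variables (k : nat) (n : 'I_k -> nat).
Hypothesis n_gt0 : forall s, (0 < n s)%N.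

Lemma Scard_le : (Scard n <= (\sum_(s < k) n s) - k + 1)%N.
Proof.
rewrite /Scard /Sset; set L := [seq _ | s <- _, r <- _].
have size_L : size L = (\sum_(s < k) n s)%N.
  rewrite size_allpairs_dep sumnE big_map big_enum.
  by apply: eq_bigr => s _; rewrite size_iota.
have zero_count : (k <= count_mem (0 : rat) L)%N.
  rewrite count_flatten sumnE !big_map -enumT big_enum /=.
  rewrite -[X in (X <= _)%N]card_ord -sum1_card.
  apply: leq_sum => s _; case: (n s) (n_gt0 s) => // m _.
  by rewrite /= mul0r eqxx.
by rewrite -size_L (leq_trans (size_undup_le_count 0 L)) // leq_add2r leq_sub2l.
Qed.

Lemma sum_totient_denominators_le : (\sum_(d <- denominators n) totient d <= Scard n)%N.
Proof.
pose reduced d := [seq r <- iota 0 d | coprime r d].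
pose M := [seq (Posz r)%:Q / (Posz d)%:Q | d <- denominators n, r <- reduced d].
have size_M : size M = (\sum_(d <- denominators n) totient d)%N.
  rewrite size_allpairs_dep sumnE big_map; apply: eq_bigr => d _.
  rewrite size_filter totient_count_coprime /index_iota subn0 -sum1_count big_mkcond.
  by apply: eq_bigr => r _; rewrite coprime_sym; case: coprime.
rewrite -size_M /Scard /Sset; apply: uniq_leq_size.
  apply: allpairs_uniq_dep; first exact: undup_uniq.
    by move=> d _; rewrite filter_uniq // iota_uniq.
  move=> [d1 r1] [d2 r2] /allpairsPdep[? [? [d1_den r1_red [-> ->]]]].
  move=> /allpairsPdep[? [? [d2_den r2_red [-> ->]]]] /= E.
  move: r1_red r2_red; rewrite !mem_filter => /andP[cop1 _] /andP[cop2 _].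
  have d1_gt0 := denominators_gt0 n_gt0 d1_den; have d2_gt0 := denominators_gt0 n_gt0 d2_den.
  by have [-> ->] := coprime_fraction_inj d1_gt0 d2_gt0 cop1 cop2 E.
move=> q /allpairsPdep[d [r [d_den r_red ->]]]; rewrite mem_undup.
move: r_red; rewrite mem_filter mem_iota add0n => /andP[_ r_lt_d].
move: d_den; rewrite mem_denominators // => /existsP[s /dvdnP[m]]; rewrite mulnC => n_eq.
have m_gt0 : (0 < m)%N by move: (n_gt0 s); rewrite n_eq muln_gt0 => /andP[].
apply/allpairsPdep; exists s, (r * m)%N; split; first by rewrite mem_enum.
  by rewrite mem_iota add0n n_eq ltn_pmul2r.
rewrite n_eq !PoszM !rmorphM /= invfM mulrACA divff ?mulr1 // intr_eq0.
by rewrite -lt0n.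
Qed.

End Counting.

(* Coquelicot's [C] and MathComp's [R[i]] are both [R * R] with the same operations; [complexC]
   carries the hypothesis into [R[i]], where the algebraic theory of roots of unity applies. *)
Definition complexC (c : C) : R[i] := Complex c.1 c.2.

Lemma complexCD x y : complexC (Cplus x y) = (complexC x + complexC y)%R.
Proof. by case: x => ? ?; case: y. Qed.

Lemma complexCM x y : complexC (Cmult x y) = (complexC x * complexC y)%R.
Proof. by case: x => ? ?; case: y. Qed.

Lemma complexCB x y : complexC (Cminus x y) = (complexC x - complexC y)%R.
Proof. by case: x => ? ?; case: y. Qed.

Lemma complexC0 : complexC (RtoC (IZR 0)) = 0%R.
Proof. by []. Qed.

Lemma complexC1 : complexC (RtoC (IZR 1)) = 1%R.
Proof. by []. Qed.

Lemma complexC_div x y :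
  complexC y != 0%R -> complexC (Cdiv x y) = (complexC x / complexC y)%R.
Proof.
move=> y_neq0; rewrite /Cdiv complexCM; congr (_ * _)%R.
have : y <> RtoC (IZR 0) by move=> y0; rewrite y0 complexC0 eqxx in y_neq0.
move=> /Cinv_r /(congr1 complexC); rewrite complexCM complexC1 => yVy.
by rewrite -[complexC (Cinv y)](mulKf y_neq0) yVy mulr1.
Qed.

Lemma complexC_sum k (F : 'I_k -> C) :
  complexC (\big[Cplus/RtoC (IZR 0)]_(s < k) F s) = (\sum_(s < k) complexC (F s))%R.
Proof. exact: (big_morph complexC complexCD complexC0). Qed.

Lemma cisD a b : Cmult (cis a) (cis b) = cis (a + b).
Proof. by rewrite /cis /Cmult /= cos_plus sin_plus; congr (_, _); rewrite Rplus_comm. Qed.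

Lemma ep_expr p m : complexC (ep p m) = (complexC (ep p 1) ^+ m)%R.
Proof.
elim: m => [|m IHm]; first by rewrite /ep /cis /= Rmult_0_r /Rdiv Rmult_0_l cos_0 sin_0.
rewrite exprS -IHm -complexCM cisD /ep; congr (complexC (cis _)).
by rewrite S_INR Rmult_plus_distr_l Rdiv_plus_distr Rplus_comm.
Qed.

Lemma ep_self p : (0 < p)%N -> complexC (ep p p) = 1%R.
Proof.
move=> p_gt0; have p_neq0 : INR p <> 0%R by apply: not_0_INR; case: p p_gt0.
by rewrite /ep /Rdiv Rmult_assoc Rinv_r // Rmult_1_r /cis cos_2PI sin_2PI.
Qed.

Lemma ep1_neq1 p : (1 < p)%N -> complexC (ep p 1) != 1%R.
Proof.
move=> p_gt1; apply/eqP => /(congr1 (@complex.Re _)) /=.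
set t := Rdiv (Rmult (Rmult 2 PI) (INR 1)) (INR p).
have p_ge2 : Rle 2 (INR p) by have := le_INR 2 p (elimT ssrnat.leP p_gt1).
have tp : Rmult t (INR p) = Rmult 2 PI.
  by rewrite /t /Rdiv Rmult_assoc Rinv_l ?Rmult_1_r //; lra.
have := PI_RGT_0 => PI_gt0.
have t_gt0 : Rlt 0 t by nra.
have t_le_PI : Rle t PI by nra.
have := cos_decreasing_1 0 t (Rle_refl 0) (Rlt_le _ _ PI_gt0) (Rlt_le _ _ t_gt0) t_le_PI t_gt0.
by rewrite cos_0 => cos_lt1 cos_eq1; rewrite cos_eq1 in cos_lt1; apply: Rlt_irrefl cos_lt1.
Qed.

Lemma ep1_prim_root p : prime p -> (p.-primitive_root (complexC (ep p 1)))%R.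
Proof.
move=> p_prime; have p_gt0 := prime_gt0 p_prime.
have ep1_order : (complexC (ep p 1) ^+ p = 1)%R by rewrite -ep_expr ep_self.
have [m prim_m m_dvd_p] := prim_order_exists p_gt0 ep1_order.
have [m1|m_neq1] := eqVneq m 1%N.
  have := ep1_neq1 (prime_gt1 p_prime).
  by move: (prim_expr_order prim_m); rewrite m1 expr1 => ->; rewrite eqxx.
by rewrite (prime_nt_dvdP p_prime m_neq1 m_dvd_p) in prim_m.
Qed.

Theorem corollary1p2 (k : nat) (n a : 'I_k -> nat) (p : nat) :
  (1 <= k)%N ->
  (forall s : 'I_k, (0 < n s)%N) ->
  (forall s : 'I_k, (a s < n s)%N) ->
  prime p ->
  (forall s : 'I_k, ~~ (p %| n s)%N) ->
  \big[Cplus/RtoC (IZR 0)]_(s < k) Cdiv (ep p (a s)) (Cminus (RtoC (IZR 1)) (ep p (n s))) = RtoC (IZR 0) ->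
  ((\sum_(s < k) n s) - k + 1 >= Scard n)%N /\ (Scard n >= p)%N.
Proof.
move=> k_gt0 n_gt0 a_lt_n p_prime p_ndvd_n sum0.
split; first exact: Scard_le.
set z := complexC (ep p 1).
have prim_z : (p.-primitive_root z)%R := ep1_prim_root p_prime.
have zn_neq1 s : (z ^+ n s != 1)%R by rewrite -(prim_order_dvd prim_z) p_ndvd_n.
have sum0_z : (\sum_(s < k) z ^+ a s / (1 - z ^+ n s) = 0)%R.
  rewrite -[RHS]complexC0 -sum0 complexC_sum; apply: eq_bigr => s _.
  have denE : complexC (Cminus (RtoC (IZR 1)) (ep p (n s))) = (1 - z ^+ n s)%R.
    by rewrite complexCB complexC1 ep_expr.
  have den_neq0 : (1 - z ^+ n s != 0)%R by rewrite subr_eq0 eq_sym.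
  by rewrite complexC_div denE ?(ep_expr p (a s)).
have root_numer := root_numer_poly n_gt0 zn_neq1 sum0_z.
have := totient_lt_size_root prim_z (numer_poly_neq0 k_gt0 n_gt0 a) root_numer.
rewrite totient_prime // prednK ?prime_gt0 // => /leq_trans; apply.
rewrite (leq_trans (size_numer_poly n_gt0 a_lt_n)) //.
by rewrite size_lcm_geom_poly // sum_totient_denominators_le.
Qed.
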